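(* Let $k\ge 1$ and let $L=(l_1,\ldots,l_k)$ be a sequence of positive integers in spider order, and let $S=S(L)$ be the spider defined by $L$. Let $t$ be an integer with $1\le t\le \alpha(S)$. Then for each $1\le i<j\le k$ we have $$|\mathcal{I}^t_{v_{i,l_i}}(S)|\ge |\mathcal{I}^t_{v_{j,l_j}}(S)|.$$
   Context: For a graph $G$, $\alpha(G)$ is the maximum size of an independent set in $G$, and for an integer $t\le\alpha(G)$, $\mathcal{I}^t(G)$ denotes the family of all independent sets of $G$ of size $t$. For a vertex $x$, $\mathcal{I}^t_x(G)$ denotes the subfamily of sets in $\mathcal{I}^t(G)$ containing $x$ (the star centered at $x$). Given a sequence of positive integers $L=(l_1,\ldots,l_k)$, the spider $S(L)$ is the tree consisting of a head vertex $v_0$ and, for each $1\le i\le k$, a leg which is the path $v_0,v_{i,1},v_{i,2},\ldots,v_{i,l_i}$; distinct legs share only $v_0$. The sequence $L$ is in spider order if: (1) whenever $l_i$ and $l_j$ are both odd and $l_i<l_j$, then $i<j$; (2) whenever $l_i$ and $l_j$ are both even and $l_i<l_j$, then $i>j$; (3) whenever $l_i$ is odd and $l_j$ is even, then $i<j$. *)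

From mathcomp Require Import all_boot.
Set Implicit Arguments. Unset Strict Implicit. Unset Printing Implicit Defensive.

Section Spider.
Variables (k : nat) (l : 'I_k -> nat).

(* Vertices of the spider S(L): None is the head v_0;
   Some (Tagged _ p) with i = tag, p = tagged : 'I_(l i) is the leg vertex v_{i,p+1}
   (legs and positions are 0-indexed: leg i here is leg i+1 of the paper). *)
Definition spider_vertex := option {i : 'I_k & 'I_(l i)}.

Definition spider_adj (x y : spider_vertex) : bool :=
  match x, y with
  | None, None => false
  | None, Some u => val (tagged u) == 0
  | Some u, None => val (tagged u) == 0
  | Some u, Some w =>
      (tag u == tag w) &&
      (((val (tagged u)).+1 == val (tagged w)) || ((val (tagged w)).+1 == val (tagged u)))
  end.

Definition independent (A : {set spider_vertex}) : bool :=
  [forall x in A, forall y in A, ~~ spider_adj x y].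

Definition spider_alpha : nat :=
  \max_(A : {set spider_vertex} | independent A) #|A|.

Definition istar (t : nat) (x : spider_vertex) : {set {set spider_vertex}} :=
  [set A : {set spider_vertex} | [&& independent A, #|A| == t & x \in A]].

Lemma pred_lt n : 0 < n -> n.-1 < n.
Proof. by case: n. Qed.

Definition leaf (i : 'I_k) (hi : 0 < l i) : spider_vertex :=
  Some (Tagged (fun j => 'I_(l j)) (Ordinal (pred_lt hi))).

Definition spider_order : Prop :=
  forall i j : 'I_k,
    [/\ (odd (l i) -> odd (l j) -> l i < l j -> i < j),
        (~~ odd (l i) -> ~~ odd (l j) -> l i < l j -> j < i)
      & (odd (l i) -> ~~ odd (l j) -> i < j)].

End Spider.

(* Write G_x for the polynomial whose t-th coefficient is |I^t_x(S)|. An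
   independent set containing the leaf of leg i splits into its traces on legs
   i, j and on the rest of the spider, and the traces on a path are counted by
   Fibonacci polynomials F_n. A d'Ocagne-type identity then yields, for
   l_i <= l_j,
     G_{leaf i} - G_{leaf j} = (-1)^(l_i - 1) X^(l_i) F_(l_j - l_i) (X O - N),
   where O and N count the independent sets of the rest avoiding, resp.
   containing, the head. X O - N has nonnegative coefficients since deleting
   the head is injective, and spider order forces one of the two favourable
   cases: l_i odd with l_i <= l_j, or l_j even with l_j <= l_i. *)

From mathcomp Require Import all_boot all_algebra.
From mathcomp Require Import ring.
Import GRing.Theory Num.Theory.
Set Implicit Arguments. Unset Strict Implicit. Unset Printing Implicit Defensive.
Open Scope ring_scope.

Section Fibonacci.
Variable R : comNzRingType.

(* [fibp n.+2] is the independence polynomial of the path on [n] vertices. *)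
Fixpoint fibp (n : nat) : {poly R} :=
  match n with
  | 0 => 0
  | m.+1 => if m is k.+1 then fibp m + 'X * fibp k else 1
  end.

Lemma fibp0 : fibp 0 = 0. Proof. by []. Qed.
Lemma fibp1 : fibp 1 = 1. Proof. by []. Qed.
Lemma fibpSS n : fibp n.+2 = fibp n.+1 + 'X * fibp n. Proof. by []. Qed.
Arguments fibp : simpl never.

Lemma fibp_dOcagne m d :
  fibp m * fibp (m + d).+1 - fibp m.+1 * fibp (m + d) = - ((- 'X) ^+ m * fibp d).
Proof.
elim: m => [|m IH]; first by rewrite add0n fibp0 fibp1; ring.
rewrite addSn !fibpSS exprS.
transitivity (- 'X * (fibp m * fibp (m + d).+1 - fibp m.+1 * fibp (m + d))); first ring.
by rewrite IH; ring.
Qed.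

(* The left side is G_{leaf i} - G_{leaf j} with the path polynomials evaluated;
   [O] and [N] stand for the rest of the spider without and with its head. *)
Lemma fibp_leaf_gap (O N : {poly R}) a d : (0 < a)%N ->
  'X * fibp a * fibp (a + d).+2 * O + 'X * fibp a.-1 * fibp (a + d).+1 * N
  - ('X * fibp (a + d) * fibp a.+2 * O + 'X * fibp (a + d).-1 * fibp a.+1 * N)
  = (-1) ^+ a.-1 * 'X ^+ a * fibp d * ('X * O - N).
Proof.
case: a => // a _; rewrite addSn /=.
transitivity ('X * (N - 'X * O) * (fibp a * fibp (a + d).+1 - fibp a.+1 * fibp (a + d))).
  by rewrite !fibpSS; ring.
by rewrite fibp_dOcagne [(- 'X) ^+ _]exprNn exprS; ring.
Qed.

End Fibonacci.
Arguments fibp {R} n : simpl never.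

Notation nneg_poly := (polyOver (@Num.Def.nneg_num_pred int)).

Lemma fibp_nneg n : fibp n \in nneg_poly.
Proof.
elim/ltn_ind: n => -[|[|n]] IH; rewrite ?fibp0 ?fibp1 ?rpred0 ?rpred1 //.
by rewrite fibpSS rpredD ?rpredM ?polyOverX ?IH.
Qed.

Definition setgf (T : finType) (P : pred {set T}) : {poly int} :=
  \sum_(A : {set T} | P A) 'X^#|A|.

Lemma coef_setgf (T : finType) (P : pred {set T}) n :
  (setgf P)`_n = #|[set A | P A & #|A| == n]|%:R.
Proof.
rewrite /setgf coef_sum (eq_bigr (fun A : {set T} => (#|A| == n)%:R : int)); last first.
  by move=> A _; rewrite coefXn eq_sym.
rewrite -sumr_const big_mkcond [RHS]big_mkcond /=; apply: eq_bigr => A _.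
by rewrite inE; case: (P A); case: (#|A| == n).
Qed.

Lemma big_subset_imset_split (V : nmodType) (T U : finType) (f : U -> T)
    (D : {set T}) (F : {set T} -> V) :
  injective f -> f @: setT \subset D ->
  \sum_(A : {set T} | A \subset D) F A =
  \sum_(S : {set U}) \sum_(B : {set T} | B \subset D :\: f @: setT) F (f @: S :|: B).
Proof.
move=> finj hD.
have notin_img (B : {set T}) (x : T) : B \subset D :\: f @: setT -> x \in B -> x \notin f @: setT.
  by move=> /subsetP hB /hB; rewrite inE => /andP[].
rewrite (partition_big (fun A : {set T} => f @^-1: A) xpredT) //=.
apply: eq_bigr => S _.
rewrite (reindex_onto (fun B => f @: S :|: B) (fun A => A :\: f @: setT)); last first.
  move=> A /andP[hA /eqP <-]; apply/setP => x; rewrite !inE.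
  case: (boolP (x \in f @: setT)) => [/imsetP[y _ ->]|xn] /=.
    by rewrite orbF (mem_imset _ _ finj) inE.
  rewrite orbC; case: (x \in A) => //=.
  by apply/negbTE/negP => /imsetP[y _ yx]; rewrite yx imset_f in xn.
apply: eq_bigl => B; apply/idP/idP.
  case/andP => /andP[hSB _] /eqP <-; apply/subsetP => x; rewrite [x \in _ :\: _]inE.
  by case/andP => xn xSB; rewrite inE xn (subsetP hSB).
move=> hB; rewrite -andbA; apply/and3P; split.
- apply/subsetP => x; rewrite inE => /orP[/imsetP[y _ ->]|xB].
    by apply: (subsetP hD); apply: imset_f.
  by move: (subsetP hB x xB); rewrite inE => /andP[].
- apply/eqP/setP => y; rewrite !inE (mem_imset _ _ finj).
  by case: (y \in S) => //=; apply/negP => /(notin_img _ _ hB); rewrite imset_f.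
- apply/eqP/setP => x; rewrite !inE.
  case xB: (x \in B); first by rewrite orbT andbT (negPf (notin_img _ _ hB xB)).
  rewrite orbF; case: (boolP (x \in f @: setT)) => xn; rewrite ?andbF ?andbT //.
  by apply/negbTE/negP => /imsetP[y _ yx]; rewrite yx imset_f in xn.
Qed.

Definition shift n (S : {set 'I_n}) : {set 'I_n.+1} := lift ord0 @: S.

Section Shift.
Variable n : nat.
Implicit Type S : {set 'I_n}.

Lemma val_lift0 (p : 'I_n) : val (lift ord0 p) = p.+1 :> nat.
Proof. exact: lift0. Qed.

Lemma mem_shift S (p : 'I_n) : (lift ord0 p \in shift S) = (p \in S).
Proof. exact: mem_imset (@lift_inj _ ord0). Qed.

Lemma ord0_notin_shift S : ord0 \notin shift S.
Proof. by apply/imsetP => -[p _ /eqP]; rewrite (negPf (neq_lift _ _)). Qed.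

Lemma card_shift S : #|shift S| = #|S|.
Proof. exact: card_imset (@lift_inj _ ord0). Qed.

Lemma card_shift1 S : #|ord0 |: shift S| = #|S|.+1.
Proof. by rewrite cardsU1 card_shift ord0_notin_shift. Qed.

Lemma big_set_shift (V : nmodType) (G : {set 'I_n.+1} -> V) :
  \sum_(S : {set 'I_n.+1}) G S = \sum_(S : {set 'I_n}) (G (shift S) + G (ord0 |: shift S)).
Proof.
have rest0 : setT :\: shift [set: 'I_n] = [set ord0].
  apply/setP => x; rewrite !inE; case: (unliftP ord0 x) => [y ->|->].
    by rewrite mem_shift inE eq_sym (negPf (neq_lift _ _)).
  by rewrite ord0_notin_shift eqxx.
rewrite (eq_bigl (fun S : {set 'I_n.+1} => S \subset setT)); last by move=> S; rewrite subsetT.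
rewrite (big_subset_imset_split _ (@lift_inj _ ord0)) ?subsetT // rest0.
apply: eq_bigr => S _.
rewrite (eq_bigl (fun B : {set 'I_n.+1} => B \in [set set0; [set ord0]])); last first.
  by move=> B; rewrite -powerset1 powersetE.
rewrite big_setU1 ?big_set1 /= ?setU0 1?setUC // !inE eq_sym.
by apply/negP => /eqP/setP/(_ ord0); rewrite !inE eqxx.
Qed.

End Shift.

Section PathSets.
Variable n : nat.
Implicit Type S : {set 'I_n}.

Definition path_independent S := [forall p in S, forall q in S, (val p).+1 != val q].
Definition avoids_first S := [forall p in S, val p != 0%N].
Definition has_last S := [exists p in S, val p == n.-1].

Lemma path_independentP S :
  reflect {in S &, forall p q : 'I_n, (val p).+1 != val q} (path_independent S).
Proof.
apply: (iffP forall_inP) => [h p q pS | h p pS]; first exact: (forall_inP (h p pS) q).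
by apply/forall_inP => q; apply: h.
Qed.

End PathSets.

Section PathShift.
Variable n : nat.
Implicit Type S : {set 'I_n}.

Lemma path_independent_shift S : path_independent (shift S) = path_independent S.
Proof.
apply/path_independentP/path_independentP => h p q.
  by move=> pS qS; have := h (lift ord0 p) (lift ord0 q); rewrite !mem_shift !val_lift0; apply.
by move=> /imsetP[p' pS ->] /imsetP[q' qS ->]; rewrite !val_lift0; apply: h.
Qed.

Lemma path_independent_shift1 S :
  path_independent (ord0 |: shift S) = path_independent S && avoids_first S.
Proof.
apply/path_independentP/andP => [h|[/path_independentP hS /forall_inP hf] p q].
  split.
    rewrite -path_independent_shift; apply/path_independentP => p q pS qS.
    by apply: h; rewrite inE ?pS ?qS orbT.
  apply/forall_inP => p pS; have := h ord0 (lift ord0 p).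
  by rewrite setU11 inE mem_shift pS orbT val_lift0 eq_sym; apply.
rewrite !inE => /orP[/eqP->|/imsetP[p' p'S ->]] /orP[/eqP->|/imsetP[q' q'S ->]];
  rewrite ?val_lift0 //=.
  by rewrite eqSS eq_sym hf.
by rewrite eqSS hS.
Qed.

Lemma avoids_first_shift S : avoids_first (shift S).
Proof. by apply/forall_inP => _ /imsetP[q _ ->]; rewrite val_lift0. Qed.

Lemma avoids_first_shift1 S : avoids_first (ord0 |: shift S) = false.
Proof. by apply/negP => /forall_inP/(_ ord0); rewrite setU11 => /(_ isT). Qed.

Lemma has_last_shift S : has_last (shift S) = has_last S.
Proof.
apply/existsP/existsP => -[p /andP[]].
  case/imsetP => q qS ->; rewrite val_lift0 /= => /eqP hq.
  by exists q; rewrite qS /=; apply/eqP; rewrite -[in RHS]hq.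
move=> pS /eqP hp; exists (lift ord0 p); rewrite mem_shift pS val_lift0 hp /= prednK //.
exact: leq_ltn_trans (leq0n p) (ltn_ord p).
Qed.

Lemma has_last_shift1 S : has_last (ord0 |: shift S) = (n == 0%N) || has_last S.
Proof.
rewrite -has_last_shift; apply/existsP/orP.
  case=> p /andP[]; rewrite !inE => /orP[/eqP ->|pS] hp.
    by left; rewrite eq_sym.
  by right; apply/existsP; exists p; rewrite pS.
case=> [n0|/existsP[p /andP[pS hp]]].
  by exists ord0; rewrite setU11 /= eq_sym.
by exists p; rewrite inE pS orbT.
Qed.

End PathShift.

Definition pathgf n := setgf (@path_independent n).
Definition pathgf_free n :=
  setgf [pred S : {set 'I_n} | path_independent S && avoids_first S].
Definition pathgf_last n :=
  setgf [pred S : {set 'I_n} | path_independent S && has_last S].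
Definition pathgf_last_free n :=
  setgf [pred S : {set 'I_n} | [&& path_independent S, has_last S & avoids_first S]].

Lemma eq_setgf (T : finType) (P Q : pred {set T}) : P =1 Q -> setgf P = setgf Q.
Proof. by move=> PQ; apply: eq_bigl. Qed.

Lemma setgf_pred0 (T : finType) : setgf (@pred0 {set T}) = 0.
Proof. exact: big_pred0_eq. Qed.

Lemma setgf_ord0 (P : pred {set 'I_0}) : setgf P = (P set0)%:R.
Proof.
have all0 (S : {set 'I_0}) : S = set0 by apply/setP => -[].
rewrite /setgf big_mkcond (big_pred1 set0) => [|S]; last by rewrite /= [S]all0 eqxx.
by case: (P set0); rewrite /= ?cards0 ?expr0.
Qed.

Lemma setgf_shift n (P : pred {set 'I_n.+1}) :
  setgf P = setgf [pred S | P (shift S)] + 'X * setgf [pred S | P (ord0 |: shift S)].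
Proof.
rewrite /setgf big_mkcond big_set_shift big_split mulr_sumr.
congr (_ + _); rewrite [RHS]big_mkcond; apply: eq_bigr => S _ /=.
  by rewrite card_shift.
by rewrite card_shift1 exprS; case: (P _); rewrite ?mulr0.
Qed.

Lemma pathgfS n : pathgf n.+1 = pathgf n + 'X * pathgf_free n.
Proof.
rewrite /pathgf setgf_shift; congr (_ + 'X * _); apply: eq_setgf => S /=.
  exact: path_independent_shift.
exact: path_independent_shift1.
Qed.

Lemma pathgf_freeS n : pathgf_free n.+1 = pathgf n.
Proof.
rewrite /pathgf_free setgf_shift [in 'X * _](eq_setgf (Q := pred0)); last first.
  by move=> S /=; rewrite avoids_first_shift1 andbF.
rewrite setgf_pred0 mulr0 addr0; apply: eq_setgf => S /=.
by rewrite path_independent_shift avoids_first_shift andbT.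
Qed.

Lemma pathgf_lastS n :
  pathgf_last n.+1 = pathgf_last n + 'X * (if n == 0%N then pathgf_free n else pathgf_last_free n).
Proof.
rewrite /pathgf_last setgf_shift; congr (_ + 'X * _).
  by apply: eq_setgf => S /=; rewrite path_independent_shift has_last_shift.
case: ifP => n0; apply: eq_setgf => S /=;
  by rewrite path_independent_shift1 has_last_shift1 n0 /= ?andbT // andbAC andbA.
Qed.

Lemma pathgf_last_freeS n : pathgf_last_free n.+1 = pathgf_last n.
Proof.
rewrite /pathgf_last_free setgf_shift [in 'X * _](eq_setgf (Q := pred0)); last first.
  by move=> S /=; rewrite avoids_first_shift1 !andbF.
rewrite setgf_pred0 mulr0 addr0; apply: eq_setgf => S /=.
by rewrite path_independent_shift has_last_shift avoids_first_shift andbT.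
Qed.

Lemma pathgf_fibp n :
  [/\ pathgf n = fibp n.+2, pathgf_free n = fibp n.+1,
      pathgf_last n = 'X * fibp n & pathgf_last_free n = 'X * fibp n.-1].
Proof.
elim: n => [|n [IH IHfree IHlast IHlast_free]].
  rewrite /pathgf /pathgf_free /pathgf_last /pathgf_last_free !setgf_ord0 fibpSS fibp0 fibp1.
  have indep0 : path_independent (set0 : {set 'I_0}) by apply/forallP => -[].
  have free0 : avoids_first (set0 : {set 'I_0}) by apply/forallP => -[].
  have last0 : has_last (set0 : {set 'I_0}) = false by apply/existsP => -[[]].
  by rewrite /= indep0 free0 last0 mulr0 addr0.
rewrite pathgfS pathgf_freeS pathgf_lastS pathgf_last_freeS IH IHfree IHlast fibpSS.
split=> //; case: n {IH IHfree IHlast} IHlast_free => [|n] IHlast_free /=.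
  by rewrite fibp0 mulr0 add0r.
by rewrite IHlast_free fibpSS mulrDr.
Qed.

Lemma setgf_mul3 (T1 T2 T3 : finType)
    (P1 : pred {set T1}) (P2 : pred {set T2}) (P3 : pred {set T3}) :
  setgf P1 * setgf P2 * setgf P3 =
  \sum_A1 \sum_A2 \sum_A3
    (if [&& P1 A1, P2 A2 & P3 A3] then 'X^(#|A1| + #|A2| + #|A3|) else 0).
Proof.
rewrite /setgf (big_mkcond P1) (big_mkcond P2) (big_mkcond P3) -mulrA mulr_suml.
apply: eq_bigr => A1 _.
rewrite mulr_suml mulr_sumr; apply: eq_bigr => A2 _.
rewrite !mulr_sumr; apply: eq_bigr => A3 _.
case: (P1 A1); case: (P2 A2); case: (P3 A3); rewrite /= ?(mulr0, mul0r) //.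
by rewrite -2!exprD addnA.
Qed.

Lemma odd_predn n : (0 < n)%N -> odd n.-1 = ~~ odd n.
Proof. by case: n => //= n _; rewrite negbK. Qed.

Section Spider.
Variables (k : nat) (l : 'I_k -> nat).
Local Notation V := (spider_vertex l).

Definition leg_vertex (m : 'I_k) (p : 'I_(l m)) : V := Some (Tagged (fun m => 'I_(l m)) p).
Arguments leg_vertex {m} p : simpl never.

Definition leg (m : 'I_k) : {set V} := @leg_vertex m @: setT.

Lemma leg_vertex_inj m : injective (@leg_vertex m).
Proof. by move=> p q [e]; apply: eq_from_Tagged e. Qed.

Lemma in_leg m v : (v \in leg m) = (if v is Some u then tag u == m else false).
Proof.
apply/imsetP/idP => [[p _ ->]|]; first by rewrite /leg_vertex /= eqxx.
by case: v => // -[m' p] /= /eqP e; subst m'; exists p.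
Qed.

Lemma spider_adjC (x y : V) : spider_adj x y = spider_adj y x.
Proof. by rewrite /spider_adj; case: x y => [u|] [w|] //; rewrite eq_sym orbC. Qed.

Lemma spider_adj_leg m (p q : 'I_(l m)) :
  spider_adj (leg_vertex p) (leg_vertex q) = ((val p).+1 == val q) || ((val q).+1 == val p).
Proof. by rewrite /spider_adj /leg_vertex /= eqxx. Qed.

Lemma spider_adj_head m (p : 'I_(l m)) : spider_adj None (leg_vertex p) = (val p == 0%N).
Proof. by []. Qed.

Lemma spider_adj_off_leg m (p : 'I_(l m)) (v : V) :
  v \notin leg m -> v != None -> spider_adj (leg_vertex p) v = false.
Proof.
by rewrite in_leg; case: v => // u hu _; rewrite /spider_adj /leg_vertex /= eq_sym (negPf hu).
Qed.

Definition separated (A B : {set V}) := [forall x in A, forall y in B, ~~ spider_adj x y].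

Lemma separatedP (A B : {set V}) :
  reflect {in A & B, forall x y, ~~ spider_adj x y} (separated A B).
Proof.
apply: (iffP forall_inP) => [h x y xA | h x xA]; first exact: (forall_inP (h x xA) y).
by apply/forall_inP => y; apply: h.
Qed.

Lemma independentE (A : {set V}) : independent A = separated A A.
Proof. by []. Qed.

Lemma independentS (A B : {set V}) : A \subset B -> independent B -> independent A.
Proof.
rewrite !independentE => /subsetP AB /separatedP hB.
by apply/separatedP => x y xA yA; apply: hB; apply: AB.
Qed.

Lemma separatedC (A B : {set V}) : separated A B = separated B A.
Proof.
by apply/separatedP/separatedP => h x y xA yB; rewrite spider_adjC; apply: h.
Qed.

Lemma separatedUl (A B C : {set V}) : separated (A :|: B) C = separated A C && separated B C.
Proof.
apply/separatedP/andP => [h|[/separatedP hA /separatedP hB] x y].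
  by split; apply/separatedP => x y xA yC; apply: h; rewrite // inE xA ?orbT.
by rewrite inE => /orP[] xAB yC; [apply: hA | apply: hB].
Qed.

Lemma separatedUr (A B C : {set V}) : separated A (B :|: C) = separated A B && separated A C.
Proof. by rewrite separatedC separatedUl !(separatedC A). Qed.

Lemma independentU (A B : {set V}) :
  independent (A :|: B) = [&& independent A, independent B & separated A B].
Proof.
rewrite !independentE separatedUl !separatedUr (separatedC B A).
by case: (separated A A); case: (separated A B); case: (separated B B).
Qed.

Lemma independent_leg m (S : {set 'I_(l m)}) :
  independent (@leg_vertex m @: S) = path_independent S.
Proof.
rewrite independentE; apply/separatedP/path_independentP => h.
  move=> p q pS qS; have := h _ _ (imset_f _ pS) (imset_f _ qS).
  by rewrite spider_adj_leg negb_or => /andP[].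
by move=> _ _ /imsetP[p pS ->] /imsetP[q qS ->]; rewrite spider_adj_leg negb_or !h.
Qed.

Lemma separated_legs m m' (S : {set 'I_(l m)}) (S' : {set 'I_(l m')}) :
  m != m' -> separated (@leg_vertex m @: S) (@leg_vertex m' @: S').
Proof.
move=> hm; apply/separatedP => _ _ /imsetP[p _ ->] /imsetP[q _ ->].
by rewrite spider_adj_off_leg // in_leg /leg_vertex /= eq_sym.
Qed.

Lemma separated_leg_rest m (S : {set 'I_(l m)}) (R : {set V}) :
  [disjoint R & leg m] -> separated (@leg_vertex m @: S) R = (None \in R) ==> avoids_first S.
Proof.
move=> hR; apply/separatedP/implyP => [h hN|h _ y /imsetP[p pS ->] yR].
  apply/forall_inP => p pS.
  by have := h _ _ (imset_f _ pS) hN; rewrite spider_adjC spider_adj_head.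
case: y yR => [u|] yR.
  by rewrite spider_adj_off_leg // (disjointFr hR yR).
by rewrite spider_adjC spider_adj_head; apply: (forall_inP (h yR)).
Qed.

Section TwoLegs.
Variables (i j : 'I_k).
Hypothesis hij : i != j.

Definition rest : {set V} := setT :\: leg i :\: leg j.

Definition glue (S1 : {set 'I_(l i)}) (S2 : {set 'I_(l j)}) (R : {set V}) : {set V} :=
  @leg_vertex i @: S1 :|: (@leg_vertex j @: S2 :|: R).

Variable R : {set V}.
Hypothesis restR : R \subset rest.

Lemma disjoint_rest_legs : [disjoint R & leg i] /\ [disjoint R & leg j].
Proof.
by split; rewrite disjoint_subset; apply: (subset_trans restR);
  apply/subsetP => v; rewrite !inE => /andP[] // _ /andP[].
Qed.

Lemma independent_glue S1 S2 :
  independent (glue S1 S2 R) =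
  [&& path_independent S1, path_independent S2, independent R &
      (None \in R) ==> avoids_first S1 && avoids_first S2].
Proof.
have [Ri Rj] := disjoint_rest_legs.
rewrite /glue !independentU !independent_leg separatedUr separated_legs //.
rewrite !separated_leg_rest //.
by case: (path_independent S1); case: (path_independent S2); case: (independent R);
   case: (None \in R); case: (avoids_first S1); case: (avoids_first S2).
Qed.

Lemma card_glue S1 S2 : #|glue S1 S2 R| = (#|S1| + #|S2| + #|R|)%N.
Proof.
have [Ri Rj] := disjoint_rest_legs.
have legS m (S : {set 'I_(l m)}) : @leg_vertex m @: S \subset leg m by apply: imsetS.
have cardsU_disj (A B : {set V}) : [disjoint A & B] -> #|A :|: B| = (#|A| + #|B|)%N.
  by move=> AB; rewrite cardsU (disjoint_setI0 AB) cards0 subn0.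
rewrite /glue !cardsU_disj ?card_imset ?addnA //; try exact: leg_vertex_inj.
  by apply: disjointWl (legS _ S2) _; rewrite disjoint_sym.
apply/pred0P => v /=; apply/andP => -[/imsetP[p _ ->]].
rewrite inE => /orP[/imsetP[q _ [/eqP]]|]; first by rewrite (negPf hij).
by rewrite (disjointFl Ri) // in_leg /leg_vertex /= eqxx.
Qed.

Lemma leaf_in_glue (hi : (0 < l i)%N) S1 S2 : (leaf hi \in glue S1 S2 R) = has_last S1.
Proof.
have [Ri Rj] := disjoint_rest_legs.
have -> : leaf hi = leg_vertex (Ordinal (pred_lt hi)) by [].
rewrite /glue !inE (mem_imset _ _ (@leg_vertex_inj i)) (disjointFl Ri); last first.
  by rewrite in_leg /leg_vertex /= eqxx.
have -> : (leg_vertex (Ordinal (pred_lt hi)) \in @leg_vertex j @: S2) = false.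
  by apply/imsetP => -[q _ [/eqP]]; rewrite (negPf hij).
rewrite !orbF; apply/idP/existsP => [h|[p /andP[pS /eqP hp]]].
  by exists (Ordinal (pred_lt hi)); rewrite h /=.
by have -> : Ordinal (pred_lt hi) = p by apply: val_inj; rewrite /= hp.
Qed.

End TwoLegs.

Definition leafgf (m : 'I_k) (hm : (0 < l m)%N) :=
  setgf [pred A : {set V} | independent A && (leaf hm \in A)].

Definition restgf (i j : 'I_k) (head : bool) :=
  setgf [pred R : {set V} | [&& R \subset rest i j, independent R & (None \in R) == head]].

(* If the head is taken, neither leg may use its first vertex. *)
Lemma leafgf_decomp i j (hij : i != j) (hi : (0 < l i)%N) :
  leafgf hi = pathgf_last (l i) * pathgf (l j) * restgf i j false
            + pathgf_last_free (l i) * pathgf_free (l j) * restgf i j true.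
Proof.
rewrite /pathgf_last /pathgf /pathgf_last_free /pathgf_free /restgf !setgf_mul3.
rewrite /leafgf /setgf big_mkcond (eq_bigl (fun A : {set V} => A \subset setT)) => [|A]; last first.
  by rewrite subsetT.
rewrite (big_subset_imset_split _ (@leg_vertex_inj i)) ?subsetT // -big_split.
apply: eq_bigr => S1 _.
rewrite (big_subset_imset_split _ (@leg_vertex_inj j)); last first.
  apply/subsetP => _ /imsetP[q _ ->]; rewrite !inE andbT.
  by apply/imsetP => -[p _ [/eqP]]; rewrite eq_sym (negPf hij).
rewrite -big_split; apply: eq_bigr => S2 _.
rewrite big_mkcond -big_split; apply: eq_bigr => R _ /=.
case restR: (R \subset rest i j); last by rewrite !andbF addr0.
have := independent_glue hij restR S1 S2; have := leaf_in_glue hij restR hi S1 S2.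
have := card_glue hij restR S1 S2; rewrite /glue => -> -> ->.
by case: (path_independent S1); case: (path_independent S2); case: (independent R);
  case: (None \in R); case: (avoids_first S1); case: (avoids_first S2); case: (has_last S1);
  rewrite /= ?addr0 ?add0r.
Qed.

Lemma coef_leafgf (m : 'I_k) (hm : (0 < l m)%N) t :
  (leafgf hm)`_t = #|istar t (leaf hm)|%:R.
Proof.
rewrite /leafgf coef_setgf; congr (_%:R); apply: eq_card => A; rewrite !inE.
by rewrite andbAC andbA.
Qed.

Lemma restgf_sym i j b : restgf i j b = restgf j i b.
Proof. by rewrite /restgf /rest !setDDl setUC. Qed.

Lemma card_head_deletion i j m :
  (#|[set R : {set V} | [&& R \subset rest i j, independent R & (None \in R) == true]
                        & #|R| == m.+1]|
   <= #|[set R : {set V} | [&& R \subset rest i j, independent R & (None \in R) == false]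
                          & #|R| == m]|)%N.
Proof.
rewrite -(card_in_imset (f := fun R : {set V} => R :\ None)); last first.
  move=> R1 R2; rewrite !inE => /andP[/and3P[_ _ /eqP h1] _] /andP[/and3P[_ _ /eqP h2] _] e.
  by rewrite -(setD1K h1) -(setD1K h2) e.
apply/subset_leq_card/subsetP => _ /imsetP[R + ->]; rewrite !inE.
case/andP => /and3P[h1 h2 /eqP h3] /eqP h4.
rewrite eqxx (subset_trans (subD1set _ _) h1) (independentS (subD1set _ _) h2) /=.
by rewrite -eqSS -h4 (cardsD1 None R) h3.
Qed.

Lemma restgf_head_sub_nneg i j : 'X * restgf i j false - restgf i j true \in nneg_poly.
Proof.
apply/polyOverP => n; rewrite unfold_in /= coefB coefXM !coef_setgf subr_ge0.
case: n => [|n] /=; last by rewrite ler_nat; exact: card_head_deletion.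
rewrite lern0 cards_eq0; apply/eqP/setP => R; rewrite !inE.
by apply/negP => /andP[/and3P[_ _ /eqP hN] /eqP]; rewrite (cardsD1 None R) hN.
Qed.

Lemma leafgf_sub i j (hij : i != j) (hi : (0 < l i)%N) (hj : (0 < l j)%N) : (l i <= l j)%N ->
  leafgf hi - leafgf hj =
  (-1) ^+ (l i).-1 * 'X ^+ l i * fibp (l j - l i)%N * ('X * restgf i j false - restgf i j true).
Proof.
move=> lij; rewrite (leafgf_decomp hij hi) (@leafgf_decomp j i) 1?eq_sym // !(restgf_sym j i).
have [I1 F1 L1 LF1] := pathgf_fibp (l i); have [I2 F2 L2 LF2] := pathgf_fibp (l j).
rewrite I1 F1 L1 LF1 I2 F2 L2 LF2.
move: (l j - l i)%N (subnKC lij) => d <-.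
exact: fibp_leaf_gap.
Qed.

Lemma leafgf_sub_nneg i j (hi : (0 < l i)%N) (hj : (0 < l j)%N) : i != j ->
  (odd (l i) && (l i <= l j)%N) || (~~ odd (l j) && (l j <= l i)%N) ->
  leafgf hi - leafgf hj \in nneg_poly.
Proof.
have nneg_term m d :
  'X ^+ m * fibp d * ('X * restgf i j false - restgf i j true) \in nneg_poly.
  by rewrite !rpredM ?rpredX ?polyOverX ?fibp_nneg ?restgf_head_sub_nneg.
move=> hij /orP[/andP[oi lij] | /andP[ej lji]].
  by rewrite leafgf_sub // -signr_odd odd_predn // oi /= expr0 mul1r nneg_term.
rewrite -opprB leafgf_sub 1?eq_sym // -signr_odd odd_predn // ej /= expr1.
by rewrite !mulNr opprK mul1r !(restgf_sym j i) nneg_term.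
Qed.

End Spider.

Close Scope ring_scope.

Lemma spider_order_leaf_cases k (l : 'I_k -> nat) (i j : 'I_k) :
  spider_order l -> i < j ->
  (odd (l i) && (l i <= l j)) || (~~ odd (l j) && (l j <= l i)).
Proof.
move=> hord ij; have [_ even_ij _] := hord i j; have [odd_ji _ odd_even_ji] := hord j i.
have ji : (j < i) = false by rewrite ltnNge ltnW.
case oi: (odd (l i)); case oj: (odd (l j)); rewrite /= ?orbF.
- by rewrite leqNgt; apply/negP => /(odd_ji oj oi); rewrite ji.
- exact: leq_total.
- by have := odd_even_ji oj (negbT oi); rewrite ji.
- by rewrite leqNgt; apply/negP => /(even_ij (negbT oi) (negbT oj)); rewrite ji.
Qed.

Theorem theorem2p3 (k : nat) (l : 'I_k -> nat) (lpos : forall i, 0 < l i)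
  (hk : 1 <= k) (hord : spider_order l) (t : nat)
  (ht1 : 1 <= t) (ht2 : t <= spider_alpha l) :
  forall i j : 'I_k, i < j ->
    #|istar t (leaf (lpos j))| <= #|istar t (leaf (lpos i))|.
Proof.
move=> i j ij.
have /polyOverP/(_ t) := leafgf_sub_nneg (lpos i) (lpos j) (negbT (ltn_eqF ij))
                                          (spider_order_leaf_cases hord ij).
by rewrite unfold_in /= coefB !coef_leafgf subr_ge0 ler_nat.
Qed.
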